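(* For every positive integer $n$, $\mathcal M(n)\le\mathcal M(n+1)$.
   Context: An edge-magic labelling of a graph $G$ with $n$ vertices and $m$ edges is a bijection $l:V(G)\cup E(G)\to\{1,\dots,m+n\}$ such that $l(a)+l(b)+l(ab)$ is the same for all edges $ab$; $G$ is edge-magic if it admits one. $\mathcal M(n)$ denotes the maximum number of edges of an edge-magic graph with $n$ vertices. *)

From mathcomp Require Import all_boot all_order.
Set Implicit Arguments. Unset Strict Implicit. Unset Printing Implicit Defensive.

(* A simple graph on the vertex set 'I_n is given by its edge set
   E : {set {set 'I_n}}, every edge being a 2-element subset {a,b}. *)
Definition simple_edges (n : nat) (E : {set {set 'I_n}}) : bool :=
  [forall e in E, #|e| == 2].

(* Domain V(G) u E(G) of a labelling, seen inside 'I_n + {set 'I_n}. *)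
Definition lab_dom (n : nat) (E : {set {set 'I_n}}) (x : 'I_n + {set 'I_n}) : bool :=
  match x with inl _ => true | inr e => e \in E end.

(* lab is an edge-magic labelling of G = ('I_n, E):
   a bijection from V(G) u E(G) onto {1, ..., m + n} (m = #|E|) such that
   lab a + lab b + lab ab is the same for all edges ab. *)
Definition edge_magic_lab (n : nat) (E : {set {set 'I_n}})
    (lab : 'I_n + {set 'I_n} -> nat) : bool :=
  let m := #|E| in
  [&& [forall x, forall y,
        [&& lab_dom E x, lab_dom E y & lab x == lab y] ==> (x == y)],
      [forall x, lab_dom E x ==> (1 <= lab x <= m + n)],
      [forall k : 'I_(m + n).+1, (0 < k) ==> [exists x, lab_dom E x && (lab x == k)]] &
      [forall a, forall b, forall c, forall d,
        [&& a != b, [set a; b] \in E, c != d & [set c; d] \in E] ==>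
        (lab (inl a) + lab (inl b) + lab (inr [set a; b])
         == lab (inl c) + lab (inl d) + lab (inr [set c; d]))]].

(* G admits an edge-magic labelling (values of a bijection onto {1..m+n}
   are bounded by m+n, so we may search among functions into 'I_(m+n).+1). *)
Definition edge_magic (n : nat) (E : {set {set 'I_n}}) : bool :=
  [exists lab : {ffun 'I_n + {set 'I_n} -> 'I_(#|E| + n).+1},
     edge_magic_lab E (fun x => nat_of_ord (lab x))].

Definition M (n : nat) : nat :=
  \max_(E : {set {set 'I_n}} | simple_edges E && edge_magic E) #|E|.

(* An edge-magic graph with n vertices and m edges stays edge-magic, with the
   same m edges, after adding an isolated vertex labelled m + n + 1: the new
   label fills the one new slot of {1, ..., m + n + 1}, and magic sums only
   involve vertices lying on edges, which are all old vertices. *)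

From mathcomp Require Import all_boot all_order.

Set Implicit Arguments.
Unset Strict Implicit.
Unset Printing Implicit Defensive.

Lemma imset_set2 (aT rT : finType) (f : aT -> rT) (a b : aT) :
  f @: [set a; b] = [set f a; f b].
Proof. by rewrite imsetU1 imset_set1. Qed.

Section Labellings.
Variables (n : nat) (E : {set {set 'I_n}}).
Implicit Type l : 'I_n + {set 'I_n} -> nat.

Definition edge_sum l (a b : 'I_n) : nat :=
  l (inl a) + l (inl b) + l (inr [set a; b]).

Lemma edge_magic_labP l : reflect
  [/\ forall x y, lab_dom E x -> lab_dom E y -> l x = l y -> x = y,
      forall x, lab_dom E x -> 0 < l x <= #|E| + n,
      forall k, 0 < k <= #|E| + n -> exists2 x, lab_dom E x & l x = k &
      forall a b c d, a != b -> [set a; b] \in E ->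
        c != d -> [set c; d] \in E -> edge_sum l a b = edge_sum l c d]
  (edge_magic_lab E l).
Proof.
apply: (iffP and4P) => [[/forallP inj /forallP bnd /forallP onto /forallP magic]
                      | [inj bnd onto magic]]; split.
- move=> x y dx dy lxy; apply/eqP.
  by move/forallP/(_ y)/implyP: (inj x); apply; rewrite dx dy lxy eqxx.
- by move=> x; apply/implyP.
- move=> k /andP[k_gt0 k_le]; have k_lt : k < (#|E| + n).+1 by rewrite ltnS.
  have /implyP/(_ k_gt0)/existsP[x /andP[dx /eqP lx]] := onto (Ordinal k_lt).
  by exists x.
- move=> a b c d ab abE cd cdE; apply/eqP.
  move/forallP/(_ b)/forallP/(_ c)/forallP/(_ d)/implyP: (magic a); apply.
  by rewrite ab abE cd cdE.
- apply/forallP => x; apply/forallP => y.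
  by apply/implyP => /and3P[dx dy /eqP lxy]; rewrite (inj x y).
- by apply/forallP => x; apply/implyP; apply: bnd.
- apply/forallP => k; apply/implyP => k_gt0.
  have [|x dx lx] := onto k; first by rewrite k_gt0 -ltnS ltn_ord.
  by apply/existsP; exists x; rewrite dx lx eqxx.
- apply/forallP => a; apply/forallP => b; apply/forallP => c; apply/forallP => d.
  by apply/implyP => /and4P[ab abE cd cdE]; apply/eqP; apply: magic.
Qed.

Lemma edge_magicP : reflect (exists l, edge_magic_lab E l) (edge_magic E).
Proof.
apply: (iffP existsP)
  => [[lab magic] | [l /edge_magic_labP[inj bnd onto magic]]].
  by exists (fun x => nat_of_ord (lab x)).
pose lab : {ffun _ -> 'I_(#|E| + n).+1} := [ffun x => inord (l x)].
have labE x : lab_dom E x -> lab x = l x :> nat.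
  by move=> dx; rewrite ffunE inordK // ltnS; case/andP: (bnd x dx).
exists lab; apply/edge_magic_labP; split.
- by move=> x y dx dy; rewrite !labE //; apply: inj.
- by move=> x dx; rewrite labE //; apply: bnd.
- by move=> k /onto[x dx <-]; exists x; rewrite ?labE.
- by move=> a b c d ab abE cd cdE; rewrite /edge_sum !labE //; apply: magic.
Qed.

End Labellings.

Section AddIsolatedVertex.
Variables (n : nat) (E : {set {set 'I_n}}).

Local Notation lift_vertex := (lift (@ord_max n)).

Definition lift_edges : {set {set 'I_n.+1}} :=
  [set lift_vertex @: e | e : {set 'I_n} in E].

Lemma lift_vertex_inj : injective lift_vertex.
Proof. exact: lift_inj. Qed.

Lemma card_lift_edges : #|lift_edges| = #|E|.
Proof. by rewrite card_imset //; apply: imset_inj; apply: lift_vertex_inj. Qed.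

Lemma simple_lift_edges : simple_edges E -> simple_edges lift_edges.
Proof.
move=> /forallP simpleE; apply/forallP => e'; apply/implyP => /imsetP[e eE ->].
by rewrite card_imset; [apply: (implyP (simpleE e)) | apply: lift_vertex_inj].
Qed.

Lemma mem_lift_edges (e : {set 'I_n}) :
  (lift_vertex @: e \in lift_edges) = (e \in E).
Proof. by rewrite mem_imset //; apply: imset_inj; apply: lift_vertex_inj. Qed.

Lemma lift_edge_pairP (a b : 'I_n.+1) : [set a; b] \in lift_edges ->
  exists a0 b0, [/\ a = lift_vertex a0, b = lift_vertex b0 & [set a0; b0] \in E].
Proof.
case/imsetP=> e eE e_ab.
have /imsetP[a0 _ a_eq] : a \in lift_vertex @: e by rewrite -e_ab !inE eqxx.
have /imsetP[b0 _ b_eq] : b \in lift_vertex @: e by rewrite -e_ab !inE eqxx orbT.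
exists a0, b0; split => //.
by rewrite -mem_lift_edges imset_set2 -a_eq -b_eq e_ab mem_lift_edges.
Qed.

Definition lift_dom (x : 'I_n + {set 'I_n}) : 'I_n.+1 + {set 'I_n.+1} :=
  match x with
  | inl i => inl (lift_vertex i)
  | inr e => inr (lift_vertex @: e)
  end.

Lemma lab_dom_lift x : lab_dom lift_edges (lift_dom x) = lab_dom E x.
Proof. by case: x => [// | e]; apply: mem_lift_edges. Qed.

Lemma lab_dom_liftP y : lab_dom lift_edges y ->
  y = inl ord_max \/ exists2 x, lab_dom E x & y = lift_dom x.
Proof.
case: y => [v _ | e /imsetP[e0 e0E ->]]; last by right; exists (inr e0).
by case: (unliftP ord_max v) => [i -> | ->]; [right; exists (inl i) | left].
Qed.

Variable l : 'I_n + {set 'I_n} -> nat.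

Definition extend_lab (top : nat) (y : 'I_n.+1 + {set 'I_n.+1}) : nat :=
  match y with
  | inl v => if unlift ord_max v is Some i then l (inl i) else top
  | inr e => l (inr (lift_vertex @^-1: e))
  end.

Lemma extend_lab_lift top x : extend_lab top (lift_dom x) = l x.
Proof.
case: x => [i | e] /=; first by rewrite liftK.
congr (l (inr _)); apply/setP => i; rewrite inE mem_imset //.
exact: lift_vertex_inj.
Qed.

Lemma extend_lab_max top : extend_lab top (inl ord_max) = top.
Proof. by rewrite /= unlift_none. Qed.

Lemma edge_sum_extend_lab top a0 b0 :
  edge_sum (extend_lab top) (lift_vertex a0) (lift_vertex b0) = edge_sum l a0 b0.
Proof.
rewrite /edge_sum -imset_set2.
by rewrite (extend_lab_lift top (inl a0)) (extend_lab_lift top (inl b0))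
  (extend_lab_lift top (inr _)).
Qed.

Lemma edge_magic_lab_extend :
  edge_magic_lab E l -> edge_magic_lab lift_edges (extend_lab (#|E| + n).+1).
Proof.
case/edge_magic_labP => inj bnd onto magic; apply/edge_magic_labP.
rewrite card_lift_edges addnS; set top := (#|E| + n).+1.
have lt_top x : lab_dom E x -> l x < top by move/bnd/andP=> [_]; rewrite ltnS.
split.
- move=> y z /lab_dom_liftP[-> | [x dx ->]] /lab_dom_liftP[-> | [x' dx' ->]] //;
    rewrite ?extend_lab_max ?extend_lab_lift.
  + by move=> top_eq; have := lt_top x' dx'; rewrite -top_eq ltnn.
  + by move=> top_eq; have := lt_top x dx; rewrite top_eq ltnn.
  + by move/(inj _ _ dx dx') ->.
- move=> y /lab_dom_liftP[-> | [x dx ->]]; first by rewrite extend_lab_max leqnn.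
  by rewrite extend_lab_lift (ltnW (lt_top x dx)) andbT; case/andP: (bnd x dx).
- move=> k /andP[k_gt0]; rewrite leq_eqVlt ltnS => /orP[/eqP -> | k_le].
    by exists (inl ord_max); rewrite ?extend_lab_max.
  have [|x dx lx] := onto k; first by rewrite k_gt0.
  by exists (lift_dom x); rewrite ?lab_dom_lift ?extend_lab_lift.
- move=> a b c d ab /lift_edge_pairP[a0 [b0 [a_eq b_eq abE]]].
  move=> cd /lift_edge_pairP[c0 [d0 [c_eq d_eq cdE]]]; subst a b c d.
  rewrite !edge_sum_extend_lab; apply: magic => //;
    by rewrite -(inj_eq lift_vertex_inj).
Qed.

End AddIsolatedVertex.

Lemma edge_magic_lift_edges n (E : {set {set 'I_n}}) :
  edge_magic E -> edge_magic (lift_edges E).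
Proof.
case/edge_magicP => l /edge_magic_lab_extend magic.
by apply/edge_magicP; exists (extend_lab l (#|E| + n).+1).
Qed.

Theorem lemma2 (n : nat) : 0 < n -> M n <= M n.+1.
Proof.
move=> _; apply/bigmax_leqP => E /andP[simpleE magicE].
rewrite -card_lift_edges; apply: leq_bigmax_cond.
by rewrite simple_lift_edges // edge_magic_lift_edges.
Qed.
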